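(* In the setting of the Causal Complementation Theorem (with $\hat a\ne 0$, $\hat d\ge 0$, $F_0,F_1$ causal not both zero with $\gcd(F_0,F_1)=z^{-d_F}$, $0\le d_F\le\hat d$, $0\le M\le \hat d-d_F$, $\ell$ such that $\widetilde F_\ell=z^{d_F}F_\ell$ is left-justified, and $(R_0,R_1)$ the unique causal complement to $(F_0,F_1)$ for $\hat a z^{-\hat d}$ that is degree-reducing modulo $M$ in $F_\ell$), let $k>0$ be an integer and suppose $z^{-(M+k)}\mid R_\ell$. Then, with $\ell'=1-\ell$, we have $z^{-(M+k)}\mid R_{\ell'}$ if and only if $\hat{d}-d_F\geq M+k$.
   Context: A causal filter is a polynomial in $z^{-1}$ with complex coefficients; $\deg$ denotes degree in $z^{-1}$; divisibility and gcd are in $\mathbb{C}[z^{-1}]$. A causal filter $F$ is left-justified if its constant term is nonzero. $(R_0,R_1)$ is a causal complement to $(F_0,F_1)$ for $\hat{a}z^{-\hat{d}}$ if $R_0,R_1$ are causal and $F_0R_1-F_1R_0=\hat{a}z^{-\hat{d}}$; it is degree-reducing modulo $M$ in $F_\ell$ if $z^{-M}$ divides both $R_0,R_1$ and $\deg(R_\ell)<\deg(F_\ell)-\deg\gcd(F_0,F_1)+M$. *)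

(* Causal filters = polynomials in the indeterminate
   'X standing for z^{-1}, with complex coefficients R[i], R : realType. *)
From mathcomp Require Import all_boot all_algebra.
From mathcomp Require Import reals.
From mathcomp.real_closed Require Import complex.
Set Implicit Arguments. Unset Strict Implicit. Unset Printing Implicit Defensive.
Import GRing.Theory.
Local Open Scope ring_scope.

Section CausalFilters.
Variable C : fieldType.

(* degree in z^{-1}; the zero polynomial gets degree -1 (any value < 0 works
   equally well for the strict inequality below, as it plays the role of -oo) *)
Definition pdeg (p : {poly C}) : int := (size p)%:Z - 1.

Definition left_justified (F : {poly C}) : bool := F`_0 != 0.

Definition causal_complement (F0 F1 R0 R1 : {poly C}) (a : C) (d : nat) :=
  F0 * R1 - F1 * R0 = a *: 'X^d.

Definition sel (l : bool) (P0 P1 : {poly C}) : {poly C} := if l then P1 else P0.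

Definition degree_reducing (F0 F1 R0 R1 : {poly C}) (M : nat) (l : bool) :=
  ('X^M %| R0) && ('X^M %| R1) &&
  (pdeg (sel l R0 R1) < pdeg (sel l F0 F1) - pdeg (gcdp F0 F1) + M%:Z).

End CausalFilters.

From mathcomp Require Import all_boot all_algebra.
From mathcomp Require Import reals.
From mathcomp.real_closed Require Import complex.
From mathcomp Require Import zify ring.
Import GRing.Theory.
Local Open Scope ring_scope.

(* Write F_l = Ft z^{-dF} with Ft left-justified; z^{-dF} also divides F_l'.
   If z^{-n} divides both R_l and R_l', then z^{-(dF+n)} divides the
   determinant F_l R_l' - F_l' R_l = +-a z^{-d}, so dF + n <= d.  Conversely,
   cancelling z^{-dF} gives Ft R_l' = +-a z^{-(d-dF)} + B' R_l, whose right
   side is divisible by z^{-n} when n <= d - dF; since Ft(0) != 0, Ft is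
   coprime to z^{-n}, and Gauss's lemma yields z^{-n} | R_l'. *)

Lemma coprimep_Xn {K : fieldType} (n : nat) (p : {poly K}) :
  p`_0 != 0 -> coprimep 'X^n p.
Proof.
move=> p0; apply: coprimep_expl; rewrite coprimep_sym -[X in coprimep _ X]subr0.
by rewrite coprimep_XsubC rootE horner_coef0.
Qed.

Section MonomialDeterminant.
Context {K : fieldType}.
Context {A B P Q : {poly K}} {c : K} {d m n : nat}.
Hypothesis det_AB : A * Q - B * P = c *: 'X^d.
Hypothesis XmB : 'X^m %| B.
Hypothesis XnP : 'X^n %| P.

Lemma Xn_dvd_cofactor_leq : 'X^m %| A -> c != 0 -> 'X^n %| Q -> (m + n <= d)%N.
Proof.
move=> XmA c0 XnQ.
have : 'X^m * 'X^n %| c *: 'X^d by rewrite -det_AB dvdp_sub // dvdp_mul.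
rewrite dvdpZr // -exprD => /(dvdp_leq (monic_neq0 (monicXn K d))).
by rewrite !size_polyXn.
Qed.

Lemma Xn_dvd_cofactor (At : {poly K}) :
  A = At * 'X^m -> left_justified At -> (m + n <= d)%N -> 'X^n %| Q.
Proof.
move=> defA At0 le_mn_d; case/dvdpP: XmB => B' defB.
have cancel_Xm : At * Q = c *: 'X^(d - m) + B' * P.
  apply: (@mulfI _ ('X^m : {poly K})); first exact: monic_neq0 (monicXn K m).
  rewrite mulrDr -scalerAr -exprD subnKC; last by lia.
  by rewrite -det_AB defA defB; ring.
rewrite -(Gauss_dvdpr _ (coprimep_Xn n At At0)) cancel_Xm dvdp_add ?dvdp_mull //.
by rewrite -mul_polyC dvdp_mull // dvdp_exp2l //; lia.
Qed.

End MonomialDeterminant.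

Lemma causal_complement_sel {K : fieldType} (F0 F1 R0 R1 : {poly K})
    (a : K) (d : nat) :
  causal_complement F0 F1 R0 R1 a d -> forall l : bool,
  sel l F0 F1 * sel (~~ l) R0 R1 - sel (~~ l) F0 F1 * sel l R0 R1
    = (if l then - a else a) *: 'X^d.
Proof. by rewrite /causal_complement => det [] //=; rewrite scaleNr -det opprB. Qed.

Theorem mainTheorem4 (R : realType) (F0 F1 R0 R1 : {poly R[i]})
  (ahat : R[i]) (dhat dF M : nat) (l : bool) (k : nat) :
  ahat != 0 ->
  (F0 != 0) || (F1 != 0) ->
  gcdp F0 F1 %= 'X^dF ->
  (dF <= dhat)%N ->
  (M <= dhat - dF)%N ->
  (exists2 Ft : {poly R[i]}, Ft * 'X^dF = sel l F0 F1 & left_justified Ft) ->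
  causal_complement F0 F1 R0 R1 ahat dhat ->
  degree_reducing F0 F1 R0 R1 M l ->
  (0 < k)%N ->
  'X^(M + k) %| sel l R0 R1 ->
  ('X^(M + k) %| sel (~~ l) R0 R1 <-> (M + k <= dhat - dF)%N).
Proof.
move=> a0 _ gcdF le_dF _ [Ft defF Ft0] /causal_complement_sel/(_ l) det _ _ XR.
have XF : forall l', 'X^dF %| sel l' F0 F1.
  by case; rewrite -(eqp_dvdl _ gcdF) (dvdp_gcdl, dvdp_gcdr).
have c0 : (if l then - ahat else ahat) != 0 by case: (l); rewrite ?oppr_eq0.
rewrite leq_subRL //; split.
- exact: Xn_dvd_cofactor_leq det (XF _) XR (XF _) c0.
- exact: (Xn_dvd_cofactor det (XF _) XR Ft (esym defF) Ft0).
Qed.
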